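(* Let $\mathbf{C}$ and $\mathbf{D}$ be chain complexes of finite-dimensional real inner product spaces (concentrated in degrees $n\ge 0$), and let $\Phi:\mathbf{D}\to\mathbf{C}$, $\Psi:\mathbf{C}\to\mathbf{D}$ be chain maps together with a chain homotopy $h$ forming a deformation retract, i.e. $\Psi\Phi=\mathrm{id}_{\mathbf{D}}$ and $\partial h+h\partial=\mathrm{id}_{\mathbf{C}}-\Phi\Psi$. Then there exist a base of $\mathbf{C}$ and a Morse matching $\mathcal{M}$ on the resulting based chain complex such that the deformation retract $(\Psi,\Phi)$ is equivalent to the Morse retraction $(\Psi^{\mathcal{M}},\Phi^{\mathcal{M}})$ of $\mathcal{M}$ (a deformation retract $\mathbf{C}^{\mathcal M}\rightleftarrows\mathbf{C}$ of the same complex $\mathbf{C}$).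
   Context: A based chain complex of finite type over $\mathbb{R}$ is a chain complex $(\mathbf{C},\partial)$ of finite-dimensional real vector spaces $\mathbf{C}_n$, $n\ge0$, with pairwise disjoint finite index sets $I=\{I_n\}$ and a direct sum decomposition $\mathbf{C}_n=\bigoplus_{\alpha\in I_n}C_\alpha$ (elements of $I_n$ are called $n$-cells). For $\alpha\in I_n,\beta\in I_{n-1}$ let $\partial_{\beta,\alpha}=\pi_\beta\circ\partial_n\circ i_\alpha:C_\alpha\to C_\beta$, with $i_\alpha$ the inclusion of a summand and $\pi_\beta$ the projection onto a summand along the others. The graph $\mathcal G(\mathbf C)$ has vertices $\bigcup_n I_n$ and an edge $\alpha\to\beta$ whenever $\partial_{\beta,\alpha}\ne0$. A Morse matching is a set $M$ of edges such that (1) every vertex lies on at most one edge of $M$; (2) $\partial_{\beta,\alpha}$ is an isomorphism for every $\alpha\to\beta$ in $M$; (3) for each $n$, the relation on $I_n$ given by $\alpha\succ\beta$ iff there is a directed path from $\alpha$ to $\beta$ in $\mathcal G(\mathbf C)^M$ (the graph with the edges of $M$ reversed) is a partial order. Unmatched cells are critical; their set is $M^0$. The index $\mathcal I(\gamma)$ of a directed path $\gamma=(\sigma_0,\dots,\sigma_m)$ in $\mathcal G(\mathbf C)^M$ is the composite of the maps of its steps, where a non-reversed step $\sigma_i\to\sigma_{i+1}$ contributes $\partial_{\sigma_{i+1},\sigma_i}$ and a reversed matched edge contributes $-\partial_{\sigma_i,\sigma_{i+1}}^{-1}$ (the trivial path gives the identity); $\Gamma_{\beta,\alpha}=\sum_\gamma\mathcal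 I(\gamma):C_\alpha\to C_\beta$ over all paths from $\alpha$ to $\beta$ (zero if none). The Morse complex is $\mathbf C^M_n=\bigoplus_{\alpha\in I_n\cap M^0}C_\alpha$ with boundary $x\mapsto\sum_{\beta\in M^0\cap I_{n-1}}\Gamma_{\beta,\alpha}(x)$ for $x\in C_\alpha$, $\alpha\in M^0\cap I_n$. The Morse retraction consists of the chain maps $\Phi^M:\mathbf C^M\to\mathbf C$, $\Phi^M(x)=\sum_{\beta\in I_n}\Gamma_{\beta,\alpha}(x)$ for $x\in C_\alpha$, $\alpha\in M^0\cap I_n$, and $\Psi^M:\mathbf C\to\mathbf C^M$, $\Psi^M(x)=\sum_{\beta\in M^0\cap I_n}\Gamma_{\beta,\alpha}(x)$ for $x\in C_\alpha$, $\alpha\in I_n$; it is a deformation retract. Two deformation retracts $(\Psi:\mathbf C\to\mathbf D,\Phi:\mathbf D\to\mathbf C)$ and $(\Psi':\mathbf C'\to\mathbf D',\Phi':\mathbf D'\to\mathbf C')$ are equivalent if there are chain isomorphisms $f:\mathbf D\to\mathbf D'$, $g:\mathbf C\to\mathbf C'$ with $f\Psi=\Psi' g$ and $g\Phi=\Phi' f$. *)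

(* matrices over a field, row-vector convention
   (a linear map V -> W is a matrix A, acting by x |-> x *m A,
    so the composite "g after f" is the matrix product (f *m g)). *)
From HB Require Import structures.
From mathcomp Require Import all_boot all_order all_algebra.
From mathcomp Require Import boolp classical_sets fsbigop reals.
Set Implicit Arguments.
Unset Strict Implicit.
Unset Printing Implicit Defensive.
Import Order.TTheory GRing.Theory Num.Theory.
Local Open Scope ring_scope.

(* C_n = 'rV_(cdim n);  bd n : C_(n+1) -> C_n  (so bd n = d_(n+1)).    *)
Record chain_complex (R : fieldType) := ChainComplex {
  cdim : nat -> nat;
  bd : forall n, 'M[R]_(cdim n.+1, cdim n) }.

Definition is_complex (R : fieldType) (C : chain_complex R) :=
  forall n, bd C n.+1 *m bd C n = 0.

Definition is_chain_map (R : fieldType) (C D : chain_complex R)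
  (f : forall n, 'M[R]_(cdim C n, cdim D n)) :=
  forall n, bd C n *m f n = f n.+1 *m bd D n.

Definition is_chain_iso (R : fieldType) (C D : chain_complex R)
  (f : forall n, 'M[R]_(cdim C n, cdim D n)) :=
  is_chain_map f /\ forall n, row_free (f n) && row_full (f n).

Definition equiv_retracts (R : fieldType) (C D C' D' : chain_complex R)
  (Psi : forall n, 'M[R]_(cdim C n, cdim D n))
  (Phi : forall n, 'M[R]_(cdim D n, cdim C n))
  (Psi' : forall n, 'M[R]_(cdim C' n, cdim D' n))
  (Phi' : forall n, 'M[R]_(cdim D' n, cdim C' n)) :=
  exists (f : forall n, 'M[R]_(cdim D n, cdim D' n))
         (g : forall n, 'M[R]_(cdim C n, cdim C' n)),
    [/\ is_chain_iso f, is_chain_iso g,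
        (forall n, Psi n *m f n = g n *m Psi' n) &
        (forall n, Phi n *m g n = f n *m Phi' n)].

(* A base of C: for every n, finitely many cells (n, i), i < ncell n,  *)
(* and a direct sum decomposition C_n = (+)_i C_(n,i), given by the    *)
(* inclusions i_(n,i) : C_(n,i) -> C_n and projections pi_(n,i) :      *)
(* C_n -> C_(n,i) (along the other summands), where C_(n,i) is a       *)
(* space of dimension cdimc n i.                                       *)
Record base (R : fieldType) (C : chain_complex R) := Base {
  ncell : nat -> nat;
  cdimc : nat -> nat -> nat;
  incl : forall n i, 'M[R]_(cdimc n i, cdim C n);
  proj : forall n i, 'M[R]_(cdim C n, cdimc n i);
  incl_proj : forall n i j : nat, (i < ncell n)%N -> (j < ncell n)%N ->
    incl n i *m proj n j =
      if i == j then conform_mx 0 (1%:M : 'M[R]_(cdimc n i)) else 0;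
  sum_proj_incl : forall n, \sum_(i < ncell n) proj n i *m incl n i = 1%:M }.

(* cells: a = (n, i) is the i-th cell of degree n (valid iff i < ncell n);
   the index sets I_n = {(n,i) | i < ncell n} are pairwise disjoint. *)
Definition cell := (nat * nat)%type.

Section Morse.
Variables (R : fieldType) (C : chain_complex R) (B : base C).

Definition valid_cell (a : cell) : bool := (a.2 < ncell B a.1)%N.
Definition cdeg (a : cell) : nat := a.1.
Definition mdim (a : cell) : nat := cdimc B a.1 a.2.

(* d_(b,a) = pi_b o d o i_a : C_a -> C_b   (nonzero only if deg a = deg b + 1) *)
Definition dmat (a b : cell) : 'M[R]_(mdim a, mdim b) :=
  if a.1 == b.1.+1 then
    incl B a.1 a.2 *m conform_mx 0 (bd C b.1) *m proj B b.1 b.2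
  else 0.

Definition edge (a b : cell) : bool :=
  [&& valid_cell a, valid_cell b, a.1 == b.1.+1 & dmat a b != 0].

Variable M : rel cell.

Definition gM_edge (a b : cell) : bool := (edge a b && ~~ M a b) || M b a.

(* directed path from a to b in G(C)^M: the vertex list is a :: s *)
Definition gM_path (a : cell) (s : seq cell) (b : cell) : Prop :=
  path gM_edge a s /\ last a s = b.

Definition reach (a b : cell) : Prop := exists s, gM_path a s b.

Definition morse_matching : Prop :=
  [/\ (forall a b, M a b -> edge a b),
      (forall a b c d, M a b -> M c d ->
          [|| a == c, a == d, b == c | b == d] -> (a, b) = (c, d)),
      (forall a b, M a b -> row_free (dmat a b) && row_full (dmat a b)) &
      (forall n, 
        [/\ (forall a, valid_cell a -> a.1 = n -> reach a a),
            (forall a b, valid_cell a -> valid_cell b -> a.1 = n -> b.1 = n ->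
                reach a b -> reach b a -> a = b) &
            (forall a b c, valid_cell a -> valid_cell b -> valid_cell c ->
                a.1 = n -> b.1 = n -> c.1 = n ->
                reach a b -> reach b c -> reach a c)])].

Definition critical (a : cell) : bool :=
  valid_cell a && `[< ~ exists b, M a b \/ M b a >].

Definition smat (a b : cell) : 'M[R]_(mdim a, mdim b) :=
  if M b a then - pinvmx (dmat b a) else dmat a b.

Fixpoint pidx (a : cell) (s : seq cell) (b : cell) : 'M[R]_(mdim a, mdim b) :=
  match s with
  | [::] => if a == b then conform_mx 0 (1%:M : 'M[R]_(mdim a)) else 0
  | c :: s' => smat a c *m pidx c s' b
  end.

Definition Gamma (a b : cell) : 'M[R]_(mdim a, mdim b) :=
  \sum_(s \in [set s | gM_path a s b]) pidx a s b.

Definition crit_list (n : nat) : seq nat :=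
  [seq i <- iota 0 (ncell B n) | critical (n, i)].

Definition cdimM (n : nat) : nat := sumn [seq mdim (n, i) | i <- crit_list n].

(* position of the block of the critical cell (n,i) inside C^M_n *)
Definition offM (n i : nat) : nat :=
  sumn [seq mdim (n, j) | j <- crit_list n & (j < i)%N].

Definition inclM (n i : nat) : 'M[R]_(mdim (n, i), cdimM n) :=
  \matrix_(r, c) ((c : nat) == offM n i + r)%:R.

Definition bdM (n : nat) : 'M[R]_(cdimM n.+1, cdimM n) :=
  \sum_(i <- crit_list n.+1) \sum_(j <- crit_list n)
     (inclM n.+1 i)^T *m Gamma (n.+1, i) (n, j) *m inclM n j.

Definition morse_complex : chain_complex R := ChainComplex bdM.

Definition morse_Phi (n : nat) : 'M[R]_(cdimM n, cdim C n) :=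
  \sum_(i <- crit_list n) \sum_(j < ncell B n)
     (inclM n i)^T *m Gamma (n, i) (n, val j) *m incl B n j.

Definition morse_Psi (n : nat) : 'M[R]_(cdim C n, cdimM n) :=
  \sum_(j < ncell B n) \sum_(i <- crit_list n)
     proj B n j *m Gamma (n, val j) (n, i) *m inclM n i.

End Morse.

From HB Require Import structures.
From mathcomp Require Import all_boot all_order all_algebra.
From mathcomp Require Import boolp classical_sets fsbigop reals.
From mathcomp Require Import zify.
Import GRing.Theory Num.Theory.
Local Open Scope ring_scope.
Set Implicit Arguments.
Unset Strict Implicit.
Unset Printing Implicit Defensive.

(* Matrices act on row vectors, so [Pi n := Psi n *m Phi n] is the idempotent
   chain endomorphism Phi o Psi of C, and C_n = X_n (+) ker Psi_n with
   X_n = im Phi_n.  The homotopy d h + h d = 1 - Pi makes ker Psi acyclic, so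
   ker Psi_n = Z_n (+) U_n where Z_n = d (ker Psi_(n+1)) and d maps U_n
   isomorphically onto Z_(n-1).  With the cells X_n, Z_n, U_n in degree n and
   U_(n+1) matched with Z_n, the only edges of G(C)^M are X_(n+1) -> X_n and the
   reversed Z_n -> U_(n+1).  Hence no path returns to its own degree, the only
   paths between critical cells are the edges X_(n+1) -> X_n, and the Morse
   retraction is the pair (projection onto X, inclusion of X), which Phi : D ~ X
   identifies with (Psi, Phi). *)

Section MatrixFacts.
Variable R : fieldType.

Lemma thinmx0_eq m k (A : 'M[R]_(m, k)) : k = 0%N -> A = 0.
Proof. by move=> k0; move: A; rewrite k0 => A; apply: thinmx0. Qed.

Lemma flatmx0_eq m k (A : 'M[R]_(m, k)) : m = 0%N -> A = 0.
Proof. by move=> m0; move: A; rewrite m0 => A; apply: flatmx0. Qed.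

Lemma scalar_mx1_neq0 k : (0 < k)%N -> 1%:M != 0 :> 'M[R]_k.
Proof. by case: k => // k _; apply: matrix_nonzero1. Qed.

Lemma mulmx1_row_free_full m k (A : 'M[R]_(m, k)) (B : 'M_(k, m)) :
  A *m B = 1%:M -> B *m A = 1%:M -> row_free A && row_full A.
Proof.
by move=> AB BA; apply/andP; split; [apply/row_freeP | apply/row_fullP]; exists B.
Qed.

Lemma idmx_cast_orthogonal m k (e : k = m) :
  let A := \matrix_(r < m, c < k) ((c : nat) == r)%:R : 'M[R]_(m, k) in
  A *m A^T = 1%:M /\ A^T *m A = 1%:M.
Proof.
subst k => A.
have -> : A = 1%:M by apply/matrixP => i j; rewrite !mxE eq_sym.
by rewrite trmx1 mulmx1.
Qed.

End MatrixFacts.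

Section MorseGamma.
Variables (R : fieldType) (C : chain_complex R) (B : base C) (M : rel cell).

Lemma Gamma_unique_path a b s0 :
  (forall s, gM_path B M a s b <-> s = s0) -> Gamma B M a b = pidx B M a s0 b.
Proof.
move=> paths_ab; rewrite /Gamma.
have -> : [set s | gM_path B M a s b]%classic = [set s0]%classic.
  by apply/seteqP; split=> s /paths_ab.
by rewrite fsbig_set1.
Qed.

Lemma Gamma_no_path a b : (forall s, ~ gM_path B M a s b) -> Gamma B M a b = 0.
Proof.
move=> no_path; rewrite /Gamma.
have -> : [set s | gM_path B M a s b]%classic = set0.
  by apply/seteqP; split=> s // /no_path.
by rewrite fsbig_set0.
Qed.

End MorseGamma.

Section DeformationRetract.
Variables (R : fieldType) (C D : chain_complex R)
  (Phi : forall n, 'M[R]_(cdim D n, cdim C n))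
  (Psi : forall n, 'M[R]_(cdim C n, cdim D n))
  (h : forall n, 'M[R]_(cdim C n, cdim C n.+1)).
Hypotheses (complexC : is_complex C)
  (chain_Phi : is_chain_map Phi) (chain_Psi : is_chain_map Psi)
  (Phi_Psi : forall n, Phi n *m Psi n = 1%:M)
  (homotopy0 : h 0%N *m bd C 0%N = 1%:M - Psi 0%N *m Phi 0%N)
  (homotopyS : forall n,
     bd C n *m h n + h n.+1 *m bd C n.+1 = 1%:M - Psi n.+1 *m Phi n.+1).

Definition Pi n := Psi n *m Phi n.

Lemma Phi_Pi n : Phi n *m Pi n = Phi n.
Proof. by rewrite /Pi mulmxA Phi_Psi mul1mx. Qed.

Lemma Pi_Psi n : Pi n *m Psi n = Psi n.
Proof. by rewrite /Pi -mulmxA Phi_Psi mulmx1. Qed.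

Lemma Pi_idem n : Pi n *m Pi n = Pi n.
Proof. by rewrite {1}/Pi -mulmxA Phi_Pi. Qed.

Lemma Pi_bd n : Pi n.+1 *m bd C n = bd C n *m Pi n.
Proof. by rewrite /Pi -mulmxA -chain_Phi mulmxA -chain_Psi mulmxA. Qed.

Definition bdK n := kermx (Psi n.+1) *m bd C n.

Lemma bdK_Psi n : bdK n *m Psi n = 0.
Proof. by rewrite /bdK -mulmxA chain_Psi mulmxA mulmx_ker mul0mx. Qed.

Lemma bdK_bd n : bdK n.+1 *m bd C n = 0.
Proof. by rewrite /bdK -mulmxA complexC mulmx0. Qed.

(* y = (y h (1 - Pi)) d, and y h (1 - Pi) lies in ker Psi. *)
Lemma sub_bdK_homotopy p n (y : 'M_(p, cdim C n)) :
  y *m Psi n = 0 -> y *m h n *m bd C n = y -> (y <= bdK n)%MS.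
Proof.
move=> yPsi yhd; pose w := y *m h n *m (1%:M - Pi n.+1).
have wK : (w <= kermx (Psi n.+1))%MS.
  by apply/sub_kermxP; rewrite -mulmxA mulmxBl mul1mx Pi_Psi subrr mulmx0.
have -> : y = w *m bd C n.
  by rewrite -mulmxA mulmxBl mul1mx Pi_bd mulmxBr mulmxA yhd /Pi mulmxA yPsi !mul0mx subr0.
exact: submxMr.
Qed.

Lemma kerPsi_sub_bdK0 p (y : 'M_(p, cdim C 0)) : y *m Psi 0%N = 0 -> (y <= bdK 0)%MS.
Proof.
move=> yPsi; apply: sub_bdK_homotopy => //.
by rewrite -mulmxA homotopy0 mulmxBr mulmx1 mulmxA yPsi mul0mx subr0.
Qed.

Lemma kerPsi_cycle_sub_bdK p n (y : 'M_(p, cdim C n.+1)) :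
  y *m Psi n.+1 = 0 -> y *m bd C n = 0 -> (y <= bdK n.+1)%MS.
Proof.
move=> yPsi yd; apply: sub_bdK_homotopy => //.
have := congr1 (mulmx y) (homotopyS n).
rewrite mulmxDr !mulmxA yd mul0mx add0r => ->.
by rewrite mulmxBr mulmx1 mulmxA yPsi mul0mx subr0.
Qed.

Definition rX n := \rank (Phi n).
Definition inclX n : 'M_(rX n, cdim C n) := row_base (Phi n).
Definition projX n : 'M_(cdim C n, rX n) := Pi n *m pinvmx (inclX n).

Definition rZ n := \rank (bdK n).
Definition inclZ n : 'M_(rZ n, cdim C n) := row_base (bdK n).

Definition liftZ n : 'M_(rZ n, cdim C n.+1) :=
  inclZ n *m pinvmx (bdK n) *m kermx (Psi n.+1).

Definition rU n := if n is m.+1 then rZ m else 0%N.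
Definition inclU n : 'M_(rU n, cdim C n) :=
  if n is m.+1 then liftZ m else 0.
Definition projU n : 'M_(cdim C n, rU n) :=
  if n is m.+1 then (1%:M - Pi m.+1) *m bd C m *m pinvmx (inclZ m) else 0.

Definition projZ n : 'M_(cdim C n, rZ n) :=
  (1%:M - Pi n - projU n *m inclU n) *m pinvmx (inclZ n).

Lemma inclX_sub n : (inclX n <= Phi n)%MS.
Proof. by rewrite eq_row_base. Qed.

Lemma inclZ_sub n : (inclZ n <= bdK n)%MS.
Proof. by rewrite eq_row_base. Qed.

Lemma inclX_Pi n : inclX n *m Pi n = inclX n.
Proof. by have /submxP[W ->] := inclX_sub n; rewrite -mulmxA Phi_Pi. Qed.

Lemma inclZ_Psi n : inclZ n *m Psi n = 0.
Proof. by have /submxP[W ->] := inclZ_sub n; rewrite -mulmxA bdK_Psi mulmx0. Qed.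

Lemma inclZ_Pi n : inclZ n *m Pi n = 0.
Proof. by rewrite /Pi mulmxA inclZ_Psi mul0mx. Qed.

Lemma inclZ_bd n : inclZ n.+1 *m bd C n = 0.
Proof. by have /submxP[W ->] := inclZ_sub n.+1; rewrite -mulmxA bdK_bd mulmx0. Qed.

Lemma liftZ_bd n : liftZ n *m bd C n = inclZ n.
Proof. by rewrite /liftZ -mulmxA mulmxKpV // inclZ_sub. Qed.

Lemma inclU_Psi n : inclU n *m Psi n = 0.
Proof. by case: n => [|n]; rewrite ?mul0mx // /= /liftZ -mulmxA mulmx_ker mulmx0. Qed.

Lemma inclU_Pi n : inclU n *m Pi n = 0.
Proof. by rewrite /Pi mulmxA inclU_Psi mul0mx. Qed.

Lemma Pi_fixed_projU p n (y : 'M_(p, cdim C n)) : y *m Pi n = y -> y *m projU n = 0.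
Proof.
case: n y => [|n] y yPi; first by rewrite mulmx0.
by rewrite /= !mulmxA mulmxBr mulmx1 yPi subrr !mul0mx.
Qed.

Lemma Pi_fixed_projZ p n (y : 'M_(p, cdim C n)) : y *m Pi n = y -> y *m projZ n = 0.
Proof.
move=> yPi; rewrite /projZ mulmxA !mulmxBr mulmx1 yPi subrr mulmxA.
by rewrite Pi_fixed_projU // mul0mx subr0 mul0mx.
Qed.

Lemma inclX_projX n : inclX n *m projX n = 1%:M.
Proof. by rewrite /projX mulmxA inclX_Pi mulmxVp // row_base_free. Qed.

Lemma projX_inclX n : projX n *m inclX n = Pi n.
Proof. by rewrite mulmxKpV // eq_row_base submxMl. Qed.

Lemma Pi_projX n : Pi n *m projX n = projX n.
Proof. by rewrite /projX mulmxA Pi_idem. Qed.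

Lemma inclX_projZ n : inclX n *m projZ n = 0.
Proof. exact/Pi_fixed_projZ/inclX_Pi. Qed.

Lemma inclX_projU n : inclX n *m projU n = 0.
Proof. exact/Pi_fixed_projU/inclX_Pi. Qed.

Lemma inclZ_projX n : inclZ n *m projX n = 0.
Proof. by rewrite /projX mulmxA inclZ_Pi mul0mx. Qed.

Lemma inclZ_projU n : inclZ n *m projU n = 0.
Proof.
case: n => [|n]; first by rewrite mulmx0.
by rewrite /= !mulmxA mulmxBr mulmx1 inclZ_Pi subr0 inclZ_bd !mul0mx.
Qed.

Lemma inclZ_projZ n : inclZ n *m projZ n = 1%:M.
Proof.
rewrite /projZ mulmxA !mulmxBr mulmx1 inclZ_Pi subr0 mulmxA inclZ_projU mul0mx.
by rewrite subr0 mulmxVp // row_base_free.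
Qed.

Lemma inclU_projX n : inclU n *m projX n = 0.
Proof. by rewrite /projX mulmxA inclU_Pi mul0mx. Qed.

Lemma inclU_projU n : inclU n *m projU n = 1%:M.
Proof.
case: n => [|n]; first by rewrite !flatmx0.
rewrite /= (mulmxA (liftZ n)) (mulmxA (liftZ n)) mulmxBr mulmx1.
by rewrite (inclU_Pi n.+1) subr0 liftZ_bd mulmxVp // row_base_free.
Qed.

Lemma inclU_projZ n : inclU n *m projZ n = 0.
Proof.
rewrite /projZ mulmxA !mulmxBr mulmx1 inclU_Pi subr0 mulmxA inclU_projU.
by rewrite mul1mx subrr mul0mx.
Qed.

(* The part of C_n outside X_n and U_n is a cycle in ker Psi_n, hence a
   boundary of ker Psi_(n+1), i.e. it lies in Z_n. *)
Lemma rest_sub_inclZ n : (1%:M - Pi n - projU n *m inclU n <= inclZ n)%MS.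
Proof.
rewrite eq_row_base.
have restPsi : (1%:M - Pi n - projU n *m inclU n) *m Psi n = 0.
  by rewrite !mulmxBl mul1mx Pi_Psi subrr -mulmxA inclU_Psi mulmx0 subr0.
case: n restPsi => [|n] restPsi; first exact: kerPsi_sub_bdK0.
apply: kerPsi_cycle_sub_bdK => //=.
rewrite mulmxBl -mulmxA liftZ_bd mulmxKpV ?subrr // eq_row_base.
by apply/submxMr/sub_kermxP; rewrite mulmxBl mul1mx Pi_Psi subrr.
Qed.

Lemma projXZU_sum n :
  projX n *m inclX n + projZ n *m inclZ n + projU n *m inclU n = 1%:M.
Proof.
rewrite projX_inclX /projZ (mulmxKpV (rest_sub_inclZ n)).
by rewrite -addrA subrK addrC subrK.
Qed.

(* The cells of degree n are (n, 0), (n, 1), (n, 2), carrying X_n, Z_n, U_n. *)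
Definition cell_dim n i := match i with 0 => rX n | 1 => rZ n | _ => rU n end.

Definition cell_incl n i : 'M[R]_(cell_dim n i, cdim C n) :=
  match i with 0 => inclX n | 1 => inclZ n | _ => inclU n end.

Definition cell_proj n i : 'M[R]_(cdim C n, cell_dim n i) :=
  match i with 0 => projX n | 1 => projZ n | _ => projU n end.

Lemma cell_incl_proj n i j : (i < 3)%N -> (j < 3)%N ->
  cell_incl n i *m cell_proj n j =
    if i == j then conform_mx 0 (1%:M : 'M[R]_(cell_dim n i)) else 0.
Proof.
case: i => [|[|[|i]]] // _; case: j => [|[|[|j]]] // _; rewrite /= ?conform_mx_id.
- exact: inclX_projX.
- exact: inclX_projZ.
- exact: inclX_projU.
- exact: inclZ_projX.
- exact: inclZ_projZ.
- exact: inclZ_projU.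
- exact: inclU_projX.
- exact: inclU_projZ.
- exact: inclU_projU.
Qed.

Lemma sum_cell_proj_incl n : \sum_(i < 3) cell_proj n i *m cell_incl n i = 1%:M.
Proof. by rewrite !big_ord_recl big_ord0 addr0 /= addrA projXZU_sum. Qed.

Definition retract_base : base C :=
  Base (fun n i j => @cell_incl_proj n i j) sum_cell_proj_incl.

Lemma inclX_bd_Pi n : inclX n.+1 *m bd C n *m Pi n = inclX n.+1 *m bd C n.
Proof. by rewrite -mulmxA -Pi_bd mulmxA inclX_Pi. Qed.

(* Zero-dimensional U_(n+1) and Z_n stay unmatched: the 0 x 0 map between them
   is zero, hence not an edge. *)
Definition matchUZ : rel cell := fun a b =>
  [&& a.2 == 2%N, b.2 == 1%N, a.1 == b.1.+1 & (0 < rZ b.1)%N].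

Local Notation B := retract_base.
Local Notation M := matchUZ.

Lemma dmat_retract_base n i j :
  dmat B (n.+1, i) (n, j) = cell_incl n.+1 i *m bd C n *m cell_proj n j.
Proof. by rewrite /dmat /= eqxx conform_mx_id. Qed.

Lemma dmat_UZ n : dmat B (n.+1, 2%N) (n, 1%N) = 1%:M.
Proof. by rewrite dmat_retract_base /= liftZ_bd inclZ_projZ. Qed.

Lemma edge_retract_base a b : edge B a b ->
  (a.2 = 0%N /\ b.2 = 0%N) \/ (a.2 = 2%N /\ b.2 = 1%N).
Proof.
case: a b => [m i] [n j]; rewrite /edge /valid_cell /=.
case/and4P => vi vj /eqP -> {m}; rewrite dmat_retract_base.
case: i vi => [|[|[|i]]] // _; case: j vj => [|[|[|j]]] // _ /=; try by auto.
- by rewrite Pi_fixed_projZ ?inclX_bd_Pi ?eqxx.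
- by rewrite Pi_fixed_projU ?inclX_bd_Pi ?eqxx.
- by rewrite inclZ_bd mul0mx eqxx.
- by rewrite inclZ_bd mul0mx eqxx.
- by rewrite inclZ_bd mul0mx eqxx.
- by rewrite liftZ_bd inclZ_projX eqxx.
- by rewrite liftZ_bd inclZ_projU eqxx.
Qed.

Lemma gM_edge_retract a b : gM_edge B M a b ->
  [/\ a.2 = 0%N, b.2 = 0%N & a.1 = b.1.+1] \/
  [/\ a.2 = 1%N, b.2 = 2%N & b.1 = a.1.+1].
Proof.
case/orP; last by case/and4P => /eqP b2 /eqP a2 /eqP ab _; right.
case/andP=> e notM; have /and4P[_ _ /eqP ab d0] := e.
case: (edge_retract_base e) => [[-> ->]|[a2 b2]]; first by left.
exfalso; move: notM d0; case: a b ab a2 b2 {e} => [m i] [n j] /= -> -> ->.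
rewrite /M /= !eqxx /= lt0n negbK => /eqP rZ0.
by rewrite (thinmx0_eq (dmat B (n.+1, 2%N) (n, 1%N)) rZ0) eqxx.
Qed.

Lemma path_from_X a s : a.2 = 0%N -> path (gM_edge B M) a s ->
  (last a s).2 = 0%N /\ ((last a s).1 + size s)%N = a.1.
Proof.
elim: s a => [|c s IHs] a a2 /=; first by rewrite addn0.
case/andP => /gM_edge_retract[[_ c2 ac]|[a2' _ _]] p; last by rewrite a2 in a2'.
by case: (IHs c c2 p) => -> cs; rewrite addnS cs ac.
Qed.

Lemma path_from_nonX a s : a.2 <> 0%N -> path (gM_edge B M) a s ->
  s = [::] \/ exists c, s = [:: c] /\ c.1 = a.1.+1.
Proof.
case: s => [|c s] a2 /=; first by left.
case/andP => /gM_edge_retract[[a2' _ _]|[_ c2 ac]] p; first by rewrite a2' in a2.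
right; exists c; split => //.
by case: s p => [|x s] //= /andP[/gM_edge_retract[[c2' _ _]|[c2' _ _]] _];
  rewrite c2 in c2'.
Qed.

Lemma gM_path_same_deg a s b : gM_path B M a s b -> a.1 = b.1 -> s = [::].
Proof.
case=> p <-; have [a2|a2] := eqVneq a.2 0%N.
  by case: (path_from_X a2 p) => _; case: s {p} => //= c s sz e; rewrite /cell in e; lia.
by case: (path_from_nonX (elimN eqP a2) p) => [//|[c [-> /= ->]]] /n_Sn.
Qed.

Lemma reach_same_deg a b : reach B M a b -> a.1 = b.1 -> a = b.
Proof.
by case=> s abs ab; have s0 := gM_path_same_deg abs ab; case: abs => _ <-; rewrite s0.
Qed.

Lemma gM_path_X n s : gM_path B M (n.+1, 0%N) s (n, 0%N) -> s = [:: (n, 0%N)].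
Proof.
case=> p l; have [_] := path_from_X (erefl 0%N : (n.+1, 0%N).2 = 0%N) p.
by rewrite l /=; case: s p l => [|c [|d s]] //= p l; try lia; rewrite l.
Qed.

Lemma matchUZ_morse : morse_matching B M.
Proof.
split.
- move=> [m i] [n j]; rewrite /M /edge /valid_cell /=.
  case/and4P => /eqP -> /eqP -> /eqP -> rZ_gt0; rewrite !eqxx dmat_UZ.
  exact: scalar_mx1_neq0.
- move=> [a1 a2] [b1 b2] [c1 c2] [d1 d2]; rewrite /M /=.
  move=> /and4P[/eqP-> /eqP-> /eqP-> _] /and4P[/eqP-> /eqP-> /eqP-> _].
  by case/or4P => /eqP [] ->.
- move=> [m i] [n j]; rewrite /M /=.
  case/and4P => /eqP -> /eqP -> /eqP -> _; rewrite dmat_UZ.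
  by apply: (mulmx1_row_free_full (B := 1%:M)); rewrite mulmx1.
- move=> n; split.
  + by move=> a _ _; exists [::].
  + by move=> a b _ _ an bn ab _; apply: reach_same_deg; rewrite ?an ?bn.
  + move=> a b c _ _ _ an bn cn ab bc.
    have -> : a = b by apply: reach_same_deg; rewrite ?an ?bn.
    have -> : b = c by apply: reach_same_deg; rewrite ?bn ?cn.
    by exists [::].
Qed.

Lemma Gamma_same_deg a b : a.1 = b.1 -> Gamma B M a b = pidx B M a [::] b.
Proof.
move=> ab; have [<-|neq_ab] := eqVneq a b.
  by apply: Gamma_unique_path => s; split=> [/gM_path_same_deg|->]; [apply | split].
rewrite Gamma_no_path /= ?(negbTE neq_ab) // => s abs.
by move: (abs); rewrite (gM_path_same_deg abs ab) => -[_ /= a_b]; rewrite a_b eqxx in neq_ab.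
Qed.

Lemma Gamma_X n : Gamma B M (n.+1, 0%N) (n, 0%N) = dmat B (n.+1, 0%N) (n, 0%N).
Proof.
have [e|ne] := boolP (gM_edge B M (n.+1, 0%N) (n, 0%N)).
  rewrite (Gamma_unique_path (s0 := [:: (n, 0%N)])) /=.
    by rewrite /smat /M /= eqxx conform_mx_id mulmx1.
  by move=> s; split=> [/gM_path_X | ->] //; split=> //=; rewrite e.
rewrite Gamma_no_path => [|s ps]; last first.
  by move: (ps) => []; rewrite (gM_path_X ps) /= (negbTE ne).
move: ne; rewrite /gM_edge /edge /valid_cell /M /= !eqxx /=.
by rewrite andbT orbF negbK => /eqP.
Qed.

Lemma critical_X n : critical B M (n, 0%N).
Proof. by apply/andP; split => //; apply/asboolP => -[b []]; rewrite /M /= ?andbF. Qed.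

Lemma critical_dim0 n i : i != 0%N -> critical B M (n, i) -> cell_dim n i = 0%N.
Proof.
move=> i0 /andP[/= i3 /asboolP unmatched]; apply/eqP; rewrite -leqn0 leqNgt.
apply/negP => dim_gt0; apply: unmatched.
case: i i0 i3 dim_gt0 => [|[|[|i]]] //= _ _ dim_gt0.
  by exists (n.+1, 2%N); right; rewrite /M /= !eqxx.
by case: n dim_gt0 => // n dim_gt0; exists (n, 1%N); left; rewrite /M /= !eqxx.
Qed.

Lemma big_crit_list (V : nmodType) n (F : nat -> V) :
  (forall i, i != 0%N -> critical B M (n, i) -> F i = 0) ->
  \sum_(i <- crit_list B M n) F i = F 0%N.
Proof.
move=> F0; have -> : crit_list B M n = 0%N :: [seq i <- [:: 1%N; 2%N] | critical B M (n, i)].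
  by rewrite /crit_list /= critical_X.
rewrite big_cons big_filter !big_cons big_nil.
by case: ifP => c1; case: ifP => c2; rewrite ?(F0 1%N) ?(F0 2%N) ?addr0.
Qed.

Lemma cdimM_retract n : cdimM B M n = rX n.
Proof.
rewrite /cdimM sumnE big_map (big_crit_list (V := nat)) //.
by move=> i i0 ci; apply: critical_dim0.
Qed.

Local Notation inclMX n := (inclM B M n 0%N).

Lemma inclMX_orthogonal n :
  inclMX n *m (inclMX n)^T = 1%:M /\ (inclMX n)^T *m inclMX n = 1%:M.
Proof.
have -> : inclMX n = \matrix_(r, c) ((c : nat) == r)%:R.
  apply/matrixP => i j; rewrite !mxE /offM.
  by elim: (crit_list B M n).
exact: idmx_cast_orthogonal (cdimM_retract n).
Qed.

Lemma morse_Phi_retract n : morse_Phi B M n = (inclMX n)^T *m inclX n.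
Proof.
rewrite /morse_Phi big_crit_list.
  rewrite !big_ord_recl big_ord0 /= !Gamma_same_deg //= !xpair_eqE /bump /=.
  by rewrite !andbF !mulmx0 !mul0mx !addr0 eqxx conform_mx_id mulmx1.
move=> i i0 ci; apply: big1 => j _.
by rewrite (flatmx0_eq (Gamma B M (n, i) (n, val j)) (critical_dim0 i0 ci)) mulmx0 mul0mx.
Qed.

Lemma morse_Psi_retract n : morse_Psi B M n = projX n *m inclMX n.
Proof.
rewrite /morse_Psi (eq_bigr (fun j : 'I_(ncell B n) =>
  proj B n j *m Gamma B M (n, val j) (n, 0%N) *m inclMX n)).
  rewrite !big_ord_recl big_ord0 /= !Gamma_same_deg //= !xpair_eqE /bump /= !addn0.
  by rewrite !andbF !mulmx0 !mul0mx !addr0 eqxx conform_mx_id mulmx1.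
move=> j _; rewrite big_crit_list // => i i0 ci.
by rewrite (flatmx0_eq (inclM B M n i) (critical_dim0 i0 ci)) mulmx0.
Qed.

Lemma bdM_retract n :
  bdM B M n = (inclMX n.+1)^T *m (inclX n.+1 *m bd C n *m projX n) *m inclMX n.
Proof.
rewrite /bdM big_crit_list.
  rewrite big_crit_list ?Gamma_X ?dmat_retract_base // => j j0 cj.
  by rewrite (flatmx0_eq (inclM B M n j) (critical_dim0 j0 cj)) mulmx0.
move=> i i0 ci; apply: big1_seq => j _.
by rewrite (flatmx0_eq (Gamma B M (n.+1, i) (n, j)) (critical_dim0 i0 ci)) mulmx0 mul0mx.
Qed.

Lemma inclMX_trK n p q (A : 'M[R]_(p, rX n)) (Y : 'M[R]_(rX n, q)) :
  A *m inclMX n *m ((inclMX n)^T *m Y) = A *m Y.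
Proof.
by have [inclMX_tr _] := inclMX_orthogonal n; rewrite mulmxA -(mulmxA A) inclMX_tr mulmx1.
Qed.

Lemma projX_inclXK n p q (A : 'M[R]_(p, cdim C n)) (Y : 'M[R]_(cdim C n, q)) :
  A *m projX n *m (inclX n *m Y) = A *m Pi n *m Y.
Proof. by rewrite mulmxA -(mulmxA A) projX_inclX. Qed.

Definition retract_iso n : 'M[R]_(cdim D n, cdimM B M n) :=
  Phi n *m projX n *m inclMX n.

Lemma retract_iso_chain : is_chain_map (D := morse_complex B M) retract_iso.
Proof.
move=> n /=; rewrite bdM_retract /retract_iso [RHS]mulmxA inclMX_trK.
by rewrite -[inclX _ *m _ *m _]mulmxA projX_inclXK Phi_Pi !mulmxA chain_Phi.
Qed.

Lemma retract_iso_bij n : row_free (retract_iso n) && row_full (retract_iso n).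
Proof.
apply: (mulmx1_row_free_full (B := (inclMX n)^T *m (inclX n *m Psi n))).
  by rewrite /retract_iso inclMX_trK projX_inclXK Phi_Pi Phi_Psi.
have [_ tr_inclMX] := inclMX_orthogonal n.
rewrite /retract_iso [(inclMX n)^T *m _]mulmxA -(mulmxA _ (Psi n)).
rewrite !(mulmxA (Psi n)) -/(Pi n) Pi_projX.
by rewrite mulmxA -(mulmxA _ (inclX n)) inclX_projX mulmx1 tr_inclMX.
Qed.

Lemma retract_equiv_morse :
  equiv_retracts (C' := C) (D' := morse_complex B M)
    Psi Phi (morse_Psi B M) (morse_Phi B M).
Proof.
have id_iso : is_chain_iso (fun n => 1%:M : 'M[R]_(cdim C n)).
  split=> n; first by rewrite mulmx1 mul1mx.
  by apply: (mulmx1_row_free_full (B := 1%:M)); rewrite mulmx1.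
exists retract_iso, (fun n => 1%:M); split=> // [|n|n].
- by split; [exact: retract_iso_chain | exact: retract_iso_bij].
- rewrite mul1mx morse_Psi_retract /retract_iso mulmxA (mulmxA (Psi n)) -/(Pi n).
  by rewrite Pi_projX.
- by rewrite mulmx1 morse_Phi_retract /retract_iso inclMX_trK -mulmxA projX_inclX Phi_Pi.
Qed.

End DeformationRetract.

Unset Implicit Arguments.

Theorem mainTheorem1 (R : realType) (C D : chain_complex R)
  (Phi : forall n, 'M[R]_(cdim D n, cdim C n))
  (Psi : forall n, 'M[R]_(cdim C n, cdim D n))
  (h : forall n, 'M[R]_(cdim C n, cdim C n.+1)) :
  is_complex C -> is_complex D ->
  is_chain_map Phi -> is_chain_map Psi ->
  (forall n, Phi n *m Psi n = 1%:M) ->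
  h 0%N *m bd C 0%N = 1%:M - Psi 0%N *m Phi 0%N ->
  (forall n, bd C n *m h n + h n.+1 *m bd C n.+1 = 1%:M - Psi n.+1 *m Phi n.+1) ->
  exists (B : base C) (M : rel cell),
    morse_matching B M /\
    equiv_retracts (C' := C) (D' := morse_complex B M)
      Psi Phi (morse_Psi B M) (morse_Phi B M).
Proof.
move=> complexC _ chain_Phi chain_Psi Phi_Psi homotopy0 homotopyS.
exists (retract_base complexC chain_Phi chain_Psi Phi_Psi homotopy0 homotopyS).
exists (matchUZ Psi).
split; [exact: matchUZ_morse | exact: retract_equiv_morse].
Qed.
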